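(* Let $q$ be a prime power and $1\leq d\leq n-1$. Then $\mathrm{PG}_d(n,q)$ is additive under $\mathrm{EA}(q^{n+1})$.
   Context: $\mathrm{PG}_d(n,q)$ is the design whose points are the points of $\mathrm{PG}(n,q)$ and whose blocks are the point sets of all $d$-dimensional projective subspaces. $\mathrm{EA}(q^{n+1})$ is the elementary abelian group of order $q^{n+1}$. A design $(V,\mathscr B)$ is additive under an abelian group $G$ if there is an injective map $f:V\to G$ such that $\sum_{x\in B}f(x)=0$ for every block $B\in\mathscr B$. *)

From HB Require Import structures.
From mathcomp Require Import all_boot all_order all_algebra.
Set Implicit Arguments. Unset Strict Implicit. Unset Printing Implicit Defensive.
Import GRing.Theory.
Local Open Scope ring_scope.

Definition additive_design (V : finType) (blocks : {set {set V}})
  (G : zmodType) : Prop :=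
  exists f : V -> G, injective f /\
    forall B, B \in blocks -> \sum_(x in B) f x = 0.

(* Projective subspaces of PG(n, F) = vector subspaces of F^(n+1). *)
Definition is_proj_subspace (F : finFieldType) (n k : nat)
  (S : {set 'rV[F]_(n.+1)}) : bool :=
  [exists A : 'M[F]_(k.+1, n.+1),
     (\rank A == k.+1) && (S == [set v | (v <= A)%MS])].

Definition PGpoint (F : finFieldType) (n : nat) : finType :=
  {S : {set 'rV[F]_(n.+1)} | is_proj_subspace 0%N S}.

Definition PGblocks (F : finFieldType) (n d : nat) : {set {set PGpoint F n}} :=
  [set B | [exists W : {set 'rV[F]_(n.+1)},
              is_proj_subspace d W &&
              (B == [set P : PGpoint F n | val P \subset W])]].

From HB Require Import structures.
From mathcomp Require Import all_boot all_order all_algebra.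
From mathcomp Require Import all_fingroup all_solvable all_field.
Set Implicit Arguments. Unset Strict Implicit. Unset Printing Implicit Defensive.
Import GRing.Theory FinRing.Theory passmx.
Local Open Scope ring_scope.

(* Identify F^(n+1) with the field L of order q^(n+1) and code the point
   spanned by a as a^(q-1), read back in F^(n+1).  Since x^(q-1) = y^(q-1)
   forces x / y = (x / y)^q, i.e. x / y in F, the code is injective.  The
   power sums of F vanish in every exponent 0 < j < q-1 and equal -1 in
   exponent q-1, so after a binomial expansion the sum of x^(q-1) over an
   affine line c + F z equals -z^(q-1), whatever c is.  A subspace of
   dimension at least 2 is a union of q^(dim-1) parallel lines, so the sum of
   x^(q-1) over it vanishes; as its nonzero vectors are partitioned by the
   projective points it contains, so does the sum of the codes of a block. *)

Section PowerSums.
Variable F : finFieldType.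
Local Notation q := #|F|.

Lemma natr_card_finField (L : lalgType F) : q%:R = 0 :> L.
Proof.
have q0 : q%:R = 0 :> F by rewrite -zmodXgE -cardsT expg_cardG // inE.
by rewrite -(scaler_nat q (1 : L)) q0 scale0r.
Qed.

Lemma pred_card_finField_gt0 : (0 < q.-1)%N.
Proof. by rewrite -subn1 subn_gt0 finNzRing_gt1. Qed.

Lemma sum_finField_expr_lt j : (j < q.-1)%N -> \sum_(t : F) t ^+ j = 0.
Proof.
case: j => [_|j lt_j].
  rewrite (eq_bigr (fun=> 1)) => [|t _]; last by rewrite expr0.
  by rewrite sumr_const (natr_card_finField F^o).
(* Some l != 0 has l^(j+1) != 1, as X^(j+1) - 1 has fewer than q - 1 roots;
   the sum is invariant under t |-> l t. *)
have [l /andP[l0 lj1] | all_roots] := pickP [pred l : F | (l != 0) && (l ^+ j.+1 != 1)].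
  have : \sum_(t : F) t ^+ j.+1 = l ^+ j.+1 * \sum_(t : F) t ^+ j.+1.
    rewrite mulr_sumr (reindex_inj (mulfI l0)).
    by apply: eq_bigr => t _; rewrite exprMn.
  move/eqP; rewrite -subr_eq0 -{1}[\sum_t _]mul1r -mulrBl mulf_eq0 subr_eq0.
  by rewrite eq_sym (negbTE lj1) => /eqP.
have Xj1_neq0 : ('X^(j.+1) - 1 : {poly F}) != 0 by rewrite -size_poly_gt0 size_XnsubC.
suff /(max_poly_roots Xj1_neq0)/(_ (enum_uniq _)) :
    all (root ('X^(j.+1) - 1)) (enum (predC1 (0 : F))).
  by rewrite size_XnsubC // -cardE cardC1 ltnS leqNgt lt_j.
apply/allP => x; rewrite mem_enum /= => x0.
move: (all_roots x); rewrite /= (x0 : x != 0) /root !hornerE => /negbFE/eqP->.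
by rewrite subrr.
Qed.

Lemma sum_finField_expr_pred_card : \sum_(t : F) t ^+ q.-1 = -1.
Proof.
rewrite (bigD1 0) //= expr0n eqn0Ngt pred_card_finField_gt0 add0r.
rewrite (eq_bigr (fun=> 1)) => [|t t0]; last first.
  by apply: (mulfI t0); rewrite mulr1 -exprS prednK ?expf_card // ltnW ?finNzRing_gt1.
rewrite sumr_const (eq_card (B := predC1 (0 : F))) // cardC1.
apply: (addrI 1); rewrite subrr nat1r prednK ?(natr_card_finField F^o) //.
exact/ltnW/finNzRing_gt1.
Qed.

End PowerSums.

Lemma sum_row_mx (R : finType) (V : nmodType) m n (G : 'rV[R]_(m + n) -> V) :
  \sum_x G x = \sum_(a : 'rV_m) \sum_(b : 'rV_n) G (row_mx a b).
Proof.
rewrite pair_big (reindex (fun p : 'rV_m * 'rV_n => row_mx p.1 p.2)) //.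
exists (fun x => (lsubmx x, rsubmx x)) => [[a b] _ | x _] /=.
  by rewrite row_mxKl row_mxKr.
by rewrite hsubmxK.
Qed.

Section RowSpaceSums.
Variables (F : finFieldType) (V : nmodType).

Lemma sum_row_space m k (A : 'M[F]_(k, m)) (G : 'rV[F]_m -> V) : row_free A ->
  \sum_(v in [set w | (w <= A)%MS]) G v = \sum_(x : 'rV_k) G (x *m A).
Proof.
move=> freeA; have -> : [set w | (w <= A)%MS] = [set x *m A | x in [set: 'rV_k]].
  apply/setP => v; rewrite inE; apply/submxP/imsetP => [[x ->] | [x _ ->]].
    by exists x; rewrite ?inE.
  by exists x.
rewrite big_imset => [|x y _ _ /(row_free_inj freeA)] //.
by apply: eq_bigl => x; rewrite inE.
Qed.

Lemma sum_rV1 (G : 'rV[F]_1 -> V) : \sum_a G a = \sum_(t : F) G t%:M.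
Proof.
rewrite (reindex (fun t : F => t%:M)) //.
exists (fun a : 'rV_1 => a 0 0) => [t _ | a _]; first by rewrite mxE eqxx mulr1n.
by rewrite -mx11_scalar.
Qed.

End RowSpaceSums.

Section LinearPowerSums.
Variables (F : finFieldType) (L : comAlgType F).
Local Notation q := #|F|.

Lemma sum_line_expr_pred_card (c z : L) :
  \sum_(t : F) (c + t *: z) ^+ q.-1 = - z ^+ q.-1.
Proof.
have sum_term i : \sum_(t : F) (c ^+ (q.-1 - i) * (t *: z) ^+ i) *+ 'C(q.-1, i)
    = (\sum_(t : F) t ^+ i) *: (c ^+ (q.-1 - i) * z ^+ i *+ 'C(q.-1, i)).
  rewrite scaler_suml; apply: eq_bigr => t _.
  by rewrite exprZn -scalerMnr scalerAr.
under eq_bigr do rewrite exprDn.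
rewrite exchange_big big_ord_recr /= big1 => [|i _].
  by rewrite add0r sum_term subnn binn sum_finField_expr_pred_card scaleN1r mul1r.
by rewrite sum_term sum_finField_expr_lt ?scale0r.
Qed.

Lemma sum_linear_expr_pred_card k (f : {linear 'rV[F]_k.+2 -> L}) :
  \sum_x f x ^+ q.-1 = 0.
Proof.
pose e0 : 'rV[F]_(1 + k.+1) := row_mx 1%:M 0.
have f_row t b : f (row_mx t%:M b) = f (row_mx (0 : 'rV[F]_1) b) + t *: f e0.
  have -> : row_mx t%:M b = row_mx 0 b + t *: e0.
    by rewrite scale_row_mx scale_scalar_mx mulr1 scaler0 add_row_mx add0r addr0.
  by rewrite linearD linearZ.
rewrite (@sum_row_mx _ _ 1 k.+1 (fun x => f x ^+ q.-1)) exchange_big.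
rewrite (eq_bigr (fun=> - f e0 ^+ q.-1)) => [|b _].
  by rewrite sumr_const card_mx mul1n -mulr_natl natrX natr_card_finField expr0n mul0r.
by rewrite sum_rV1; under eq_bigr do rewrite /= f_row; rewrite sum_line_expr_pred_card.
Qed.

Variables (m : nat) (phi : {linear 'rV[F]_m -> L}).

Lemma sum_span_expr_pred_card (a : 'rV[F]_m) : a != 0 ->
  \sum_(v in [set w | (w <= a)%MS]) phi v ^+ q.-1 = - phi a ^+ q.-1.
Proof.
move=> a0; rewrite sum_row_space; last by rewrite /row_free rank_rV a0.
rewrite (sum_rV1 (fun x => phi (x *m a) ^+ q.-1)).
rewrite -[RHS](sum_line_expr_pred_card 0); apply: eq_bigr => t _.
by rewrite mul_scalar_mx linearZ add0r.
Qed.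

Lemma sum_subspace_expr_pred_card k (A : 'M[F]_(k.+2, m)) : row_free A ->
  \sum_(v in [set w | (w <= A)%MS]) phi v ^+ q.-1 = 0.
Proof.
move=> freeA; rewrite sum_row_space //.
exact: (sum_linear_expr_pred_card (phi \o mulmxr A)).
Qed.

End LinearPowerSums.

Lemma expr_pred_card_eq (F : finFieldType) (L : fieldExtType F) (x y : L) :
  y != 0 -> x ^+ #|F|.-1 = y ^+ #|F|.-1 -> exists t : F, x = t *: y.
Proof.
move=> y0 eq_xy; pose z := x / y.
have z_fixed : z ^+ #|F| = z.
  rewrite -(prednK (ltnW (finNzRing_gt1 F))) exprSr exprMn exprVn eq_xy.
  by rewrite divff ?mul1r ?expf_neq0.
have : z \in (1%AS : {aspace L}) by rewrite Fermat's_little_theorem dimv1 expn1 z_fixed.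
by case/vlineP => t def_z; exists t; rewrite -mulr_algl -def_z divfK.
Qed.

Section FiniteFieldExtension.
Variables (F : finFieldType) (k : nat).
Hypothesis k_gt0 : (0 < k)%N.
Local Notation m := (#|F| ^ k)%N.

Let m_gt1 : (1 < m)%N. Proof. by rewrite -(exp1n k) ltn_exp2r // finNzRing_gt1. Qed.

Lemma size_Xcard_subX (R : nzRingType) : size ('X^m - 'X : {poly R}) = m.+1.
Proof. by rewrite size_polyDl size_polyXn // size_polyN size_polyX. Qed.

Lemma separable_Xcard_subX (L : fieldExtType F) : separable_poly ('X^m - 'X : {poly L}).
Proof.
have m0 : m%:R = 0 :> L by rewrite natrX natr_card_finField expr0n gtn_eqF.
rewrite unlock derivB derivXn derivX -mulr_natr -polyC_natr m0 mulr0 sub0r.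
by rewrite -(scaleN1r (1 : {poly L})) coprimepZr ?coprimep1 ?oppr_eq0 ?oner_eq0.
Qed.

Lemma dim_splitting_field_Xcard_subX (L : splittingFieldType F) :
  splittingFieldFor 1 ('X^m - 'X) {:L} -> \dim {:L} = k.
Proof.
case=> zs def_zs gen_zs.
have mem_zs z : (z \in zs) = (z ^+ m == z).
  by rewrite -root_prod_XsubC -(eqp_root def_zs) /root !hornerE subr_eq0.
(* a is the Frobenius x |-> x^q, so the fixed field of a^k is the root set of
   X^m - X; it contains zs, hence the whole of L. *)
have [a _ Da] := finField_galois_generator (sub1v {:L}).
have a_exp i z : (a ^+ i)%g z = z ^+ (#|F| ^ i).
  elim: i => [|i IHi]; first by rewrite gal_id.
  by rewrite expgSr expnSr exprM -IHi galM ?Da ?memvf ?dimv1.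
have fixed_ak z : (z \in fixedSpace (a ^+ k)%g) = (z ^+ m == z).
  by rewrite (sameP fixedSpaceP eqP) a_exp.
have all_roots (z : L) : z ^+ m = z.
  suff: z \in fixedSpace (a ^+ k)%g by rewrite fixed_ak => /eqP.
  rewrite -[fixedSpace _]subfield_closed; move: (memvf z); rewrite -gen_zs.
  apply/subvP; rewrite agenvS // subv_add sub1v.
  by apply/span_subvP => y zs_y; rewrite fixed_ak -mem_zs.
have size_zs : size zs = m.
  by apply: succn_inj; rewrite -(size_prod_XsubC _ id) -(eqp_size def_zs) size_Xcard_subX.
apply/eqP; rewrite -(eqn_exp2l _ _ (finNzRing_gt1 F)).
rewrite -(card_vspace (fullv : {vspace finvect_type L})) card_vspacef.
have uniq_zs : uniq zs.
  by rewrite -separable_prod_XsubC -(eqp_separable def_zs) separable_Xcard_subX.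
rewrite -size_zs -(@card_uniqP (finvect_type L) zs uniq_zs).
by apply/eqP/eq_card => z; rewrite mem_zs all_roots eqxx.
Qed.

Lemma finField_ext_exists : exists L : fieldExtType F, \dim {:L} = k.
Proof.
have /FinSplittingFieldFor[L splitL] : ('X^m - 'X : {poly F}) != 0.
  by rewrite -size_poly_gt0 size_Xcard_subX.
exists L; apply: dim_splitting_field_Xcard_subX.
by rewrite rmorphB rmorphXn /= map_polyX in splitL.
Qed.

End FiniteFieldExtension.

Lemma vect_rV_iso (K : fieldType) (vT : vectType K) (m : nat) : \dim {:vT} = m ->
  exists (phi : {linear 'rV[K]_m -> vT}) (psi : {linear vT -> 'rV[K]_m}),
    cancel phi psi /\ cancel psi phi.
Proof.
move=> <-; exists (vecof (vbasis {:vT})), (rVof (vbasis {:vT})).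
by split; [apply: vecofK | apply: rVofK]; apply: vbasisP.
Qed.

Section ProjectivePoints.
Variables (F : finFieldType) (n : nat).
Implicit Types (P : PGpoint F n) (v : 'rV[F]_n.+1).

Lemma is_proj_point v : v != 0 -> is_proj_subspace 0 [set w | (w <= v)%MS].
Proof. by move=> v0; apply/existsP; exists v; rewrite rank_rV v0 /=. Qed.

Lemma PGpoint_spanP P :
  exists2 a : 'rV[F]_n.+1, a != 0 & val P = [set w | (w <= a)%MS].
Proof.
case: P => S /= /existsP[a /andP[rank_a /eqP ->]].
by exists a; move: rank_a; rewrite rank_rV; case: (a != 0).
Qed.

Lemma PGpoint_spanE P v : v != 0 -> v \in val P -> val P = [set w | (w <= v)%MS].
Proof.
have [a _ ->] := PGpoint_spanP P; rewrite inE => v0 /sub_rVP[t def_v].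
have t0 : t != 0 by apply: contraNneq v0 => t0; rewrite def_v t0 scale0r.
by apply/setP => w; rewrite !inE def_v (eqmx_scale _ t0).
Qed.

Lemma sum_PGpoints_subspace (V : nmodType) k (A : 'M[F]_(k, n.+1))
    (G : 'rV[F]_n.+1 -> V) :
  G 0 = 0 ->
  \sum_(P : PGpoint F n | val P \subset [set w | (w <= A)%MS]) \sum_(v in val P) G v
    = \sum_(v in [set w | (w <= A)%MS]) G v.
Proof.
set W := [set w | _]; move=> G0.
rewrite (exchange_big_dep (mem W)) /= => [|P v /subsetP]; last exact.
apply: eq_bigr => v vW; have [-> | v0] := eqVneq v 0; first by rewrite G0 big1.
pose Pv : PGpoint F n := exist (fun S => is_proj_subspace 0 S) _ (is_proj_point v0).
rewrite (big_pred1 Pv) // => P /=; apply/andP/eqP => [[_ vP] | ->].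
  by apply: val_inj; rewrite /= (PGpoint_spanE v0 vP).
split; last by rewrite inE submx_refl.
by apply/subsetP => w; rewrite !inE => /submx_trans; apply; rewrite inE in vW.
Qed.

End ProjectivePoints.

Section ProjectiveCode.
Variables (F : finFieldType) (n : nat) (L : fieldExtType F).
Variables (phi : {linear 'rV[F]_n.+1 -> L}) (psi : {additive L -> 'rV[F]_n.+1}).
Hypotheses (phi_inj : injective phi) (psi_inj : injective psi).
Local Notation q := #|F|.

Definition PGcode (P : PGpoint F n) := psi (\sum_(v in val P) phi v ^+ q.-1).

Lemma PGcode_inj : injective PGcode.
Proof.
move=> P Q; have [a a0 defP] := PGpoint_spanP P; have [b b0 defQ] := PGpoint_spanP Q.
rewrite /PGcode defP defQ !sum_span_expr_pred_card // => /psi_inj/oppr_inj.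
have phib0 : phi b != 0 by rewrite -(linear0 phi) (inj_eq phi_inj).
case/(expr_pred_card_eq phib0) => t; rewrite -linearZ => /phi_inj def_a.
have t0 : t != 0 by apply: contraNneq a0 => t0; rewrite def_a t0 scale0r.
apply: val_inj; rewrite defP defQ def_a.
by apply/setP => w; rewrite !inE (eqmx_scale _ t0).
Qed.

Lemma sum_PGcode_block d B : B \in PGblocks F n d.+1 -> \sum_(P in B) PGcode P = 0.
Proof.
rewrite inE => /existsP[W /andP[/existsP[A /andP[rankA /eqP defW]] /eqP ->]].
rewrite -raddf_sum; under eq_bigl do rewrite inE.
have freeA : row_free A by rewrite /row_free (eqP rankA).
rewrite defW sum_PGpoints_subspace ?sum_subspace_expr_pred_card ?raddf0 //.
by rewrite expr0n eqn0Ngt pred_card_finField_gt0.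
Qed.

End ProjectiveCode.

Theorem corollary5p2 (F : finFieldType) (n d : nat) :
  (1 <= d)%N -> (d <= n - 1)%N ->
  additive_design (PGblocks F n d) 'rV[F]_(n.+1).
Proof.
case: d => // d _ _.
have [L dimL] := finField_ext_exists F (ltn0Sn n).
have [phi [psi [phiK psiK]]] := vect_rV_iso dimL.
exists (PGcode phi psi); split; first exact: PGcode_inj (can_inj phiK) (can_inj psiK).
exact: sum_PGcode_block.
Qed.
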